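(* In $\mathbf{MetCH_{sep}}$, the pushout of a regular monomorphism along any morphism is a regular monomorphism.
   Context: A metric on a set $X$ is a map $d\colon X\times X\to[0,\infty]$ with $d(x,x)=0$ and $d(x,z)\le d(x,y)+d(y,z)$ (not necessarily symmetric, $\infty$ allowed); separated means $d(x,y)=0=d(y,x)$ implies $x=y$. A separated metric compact Hausdorff space is a compact Hausdorff space with a separated metric $d\colon X\times X\to[0,\infty]$ continuous with respect to the upper topology on $[0,\infty]$ (open sets $]u,\infty]$, plus $\emptyset$ and $[0,\infty]$). $\mathbf{MetCH_{sep}}$ has these spaces as objects and continuous non-expansive maps ($d_Y(f(x),f(y))\le d_X(x,y)$) as morphisms. *)

From HB Require Import structures.
From mathcomp Require Import all_boot all_order all_algebra.
From mathcomp Require Import all_classical all_reals topology.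
Set Implicit Arguments. Unset Strict Implicit. Unset Printing Implicit Defensive.
Import Order.TTheory GRing.Theory Num.Theory.
Local Open Scope classical_set_scope.
Local Open Scope ereal_scope.

(* A separated metric compact Hausdorff space: compact Hausdorff topological
   space X with a (not necessarily symmetric, possibly infinite) separated
   metric d : X -> X -> [0, +oo], continuous w.r.t. the upper topology on
   [0,+oo], i.e. every set {(x,y) | u < d x y} is open in X x X. *)
Record MetCH (R : realType) := MkMetCH {
  mc_space :> topologicalType;
  mc_d : mc_space -> mc_space -> \bar R;
  mc_compact : compact [set: mc_space];
  mc_hausdorff : hausdorff_space mc_space;
  mc_d_ge0 : forall x y, 0 <= mc_d x y;
  mc_d_refl : forall x, mc_d x x = 0;
  mc_d_triangle : forall x y z, mc_d x z <= mc_d x y + mc_d y z;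
  mc_d_sep : forall x y, mc_d x y = 0 -> mc_d y x = 0 -> x = y;
  mc_d_cont : forall u : \bar R,
      open [set p : mc_space * mc_space | u < mc_d p.1 p.2]
}.

Definition is_hom (R : realType) (X Y : MetCH R) (f : X -> Y) : Prop :=
  continuous f /\ forall x y : X, mc_d (f x) (f y) <= mc_d x y.

Definition is_equalizer (R : realType) (A B C : MetCH R)
    (m : A -> B) (g h : B -> C) : Prop :=
  is_hom m /\ is_hom g /\ is_hom h /\ g \o m = h \o m /\
  forall (Z : MetCH R) (k : Z -> B), is_hom k -> g \o k = h \o k ->
    exists u : Z -> A, [/\ is_hom u, m \o u = k &
      forall v : Z -> A, is_hom v -> m \o v = k -> v = u].

Definition regular_mono (R : realType) (A B : MetCH R) (m : A -> B) : Prop :=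
  exists (C : MetCH R) (g h : B -> C), is_equalizer m g h.

Definition is_pushout (R : realType) (A B C P : MetCH R)
    (m : A -> B) (f : A -> C) (f' : B -> P) (m' : C -> P) : Prop :=
  is_hom m /\ is_hom f /\ is_hom f' /\ is_hom m' /\ f' \o m = m' \o f /\
  forall (Z : MetCH R) (p : B -> Z) (q : C -> Z),
    is_hom p -> is_hom q -> p \o m = q \o f ->
    exists u : P -> Z, [/\ is_hom u, u \o f' = p, u \o m' = q &
      forall v : P -> Z, is_hom v -> v \o f' = p -> v \o m' = q -> v = u].

(* Regular monomorphisms of MetCH_sep are exactly the isometric embeddings.
   An equalizer m : A -> B is isometric because m itself, viewed as a map out
   of A carrying the metric pulled back along m, factors through the equalizer,
   necessarily via the identity of A. Conversely an isometric e : X -> Y is the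
   equalizer of its cokernel pair, the two inclusions of Y into two copies of Y
   glued along X: a point identified across the two copies is at distance 0
   from the image of e, and the infimum defining that distance is attained by
   compactness of X.
   Gluing B and C along A in the same way, with distances inside A measured in
   C, yields a cocone under the pushout square whose leg out of C is
   isometric. It factors through m' by a non-expansive map, so m' is isometric
   as well, hence a regular monomorphism.
   A glued space is the disjoint sum with the shortest-path metric through A,
   quotiented by the pairs of points at distance 0 in both directions; the
   quotient stays compact Hausdorff because lower semicontinuity of the metric
   makes the identification relation closed. *)

From HB Require Import structures.
From mathcomp Require Import all_boot all_order all_algebra generic_quotient.
From mathcomp Require Import all_classical all_reals topology ereal.
From mathcomp Require Import lra.
Set Implicit Arguments. Unset Strict Implicit. Unset Printing Implicit Defensive.
Import Order.TTheory GRing.Theory Num.Theory.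
Local Open Scope classical_set_scope.
Local Open Scope ereal_scope.
Local Open Scope quotient_scope.

Lemma open_cst_set {T : topologicalType} (P : Prop) : open [set _ : T | P].
Proof.
have [p|np] := pselect P.
  by rewrite (_ : [set _ | P] = setT); [exact: openT|apply/seteqP; split].
by rewrite (_ : [set _ | P] = set0); [exact: open0|apply/seteqP; split].
Qed.

Lemma fst_continuous {T U : topologicalType} : continuous (@fst T U).
Proof. by move=> p; exact: cvg_fst. Qed.

Lemma snd_continuous {T U : topologicalType} : continuous (@snd T U).
Proof. by move=> p; exact: cvg_snd. Qed.

Lemma continuous_pair {T U V : topologicalType} (f : T -> U) (g : T -> V) :
  continuous f -> continuous g -> continuous (fun x => (f x, g x)).
Proof. by move=> cf cg x; apply: cvg_pair; [exact: cf|exact: cg]. Qed.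

Lemma continuous_prod_map {T U T' U' : topologicalType} (f : T -> T') (g : U -> U') :
  continuous f -> continuous g -> continuous (fun p : T * U => (f p.1, g p.2)).
Proof.
move=> cf cg; apply: continuous_pair => p.
  by apply: (continuous_comp (f := fst)); [exact: fst_continuous|exact: cf].
by apply: (continuous_comp (f := snd)); [exact: snd_continuous|exact: cg].
Qed.

Lemma continuous_swap {T U : topologicalType} :
  continuous (fun p : T * U => (p.2, p.1)).
Proof. exact: swap_continuous. Qed.

Lemma compact_setTX {T U : topologicalType} :
  compact [set: T] -> compact [set: U] -> compact [set: T * U].
Proof. by rewrite -setXTT; exact: compact_setX. Qed.

Lemma hausdorff_prod {T U : topologicalType} :
  hausdorff_space T -> hausdorff_space U -> hausdorff_space (T * U)%type.
Proof.
move=> hT hU [p1 p2] [q1 q2] pq.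
have nbhsX (x : T) (y : U) P Q : nbhs x P -> nbhs y Q -> nbhs (x, y) (P `*` Q).
  by move=> Px Qy; exists (P, Q).
congr pair; [apply: hT|apply: hU] => V W pV qW.
- have [[x y] [[Vx _] [Wx _]]] :=
    pq _ _ (nbhsX _ _ _ _ pV filterT) (nbhsX _ _ _ _ qW filterT).
  by exists x.
- have [[x y] [[_ Vy] [_ Wy]]] :=
    pq _ _ (nbhsX _ _ _ _ filterT pV) (nbhsX _ _ _ _ filterT qW).
  by exists y.
Qed.

Lemma closed_image_compact {X Y : topologicalType} (f : X -> Y) (S : set X) :
  compact [set: X] -> hausdorff_space Y -> continuous f -> closed S ->
  closed (f @` S).
Proof.
move=> cX hY cf cS; apply: compact_closed => //.
apply: continuous_compact; first exact: continuous_subspaceT.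
exact: subclosed_compact cS cX _.
Qed.

Lemma compact_closed_separation {T : topologicalType} (A B : set T) :
  hausdorff_space T -> compact [set: T] -> closed A -> closed B ->
  A `&` B = set0 ->
  exists U V, [/\ open U, open V, A `<=` U, B `<=` V & U `&` V = set0].
Proof.
move=> hT cT cA cB AB.
have : set_nbhs A (~` B).
  apply/set_nbhsP; exists (~` B); split => //; first exact: closed_openC.
  by move=> x Ax Bx; have : (A `&` B) x by []; rewrite AB.
move=> /(compact_normal hT cT cA) [V /set_nbhsP [U [oU AU UV]] clV].
exists U, (~` closure V); split => //.
- exact/closed_openC/closed_closure.
- by move=> x Bx /clV.
- by apply/seteqP; split => // x [Ux]; apply; exact/subset_closure/UV.
Qed.

Lemma continuous_factor_compact_inj {X Y Z : topologicalType}
    (e : X -> Y) (k : Z -> Y) (u : Z -> X) :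
  compact [set: X] -> hausdorff_space Y -> continuous e -> injective e ->
  continuous k -> e \o u = k -> continuous u.
Proof.
move=> cX hY ce ie ck eu; apply/continuous_closedP => S cS.
have -> : u @^-1` S = k @^-1` (e @` S).
  apply/seteqP; split => z /=; rewrite -eu /=; first by exists (u z).
  by case=> x Sx /ie <-.
exact: (proj1 (continuous_closedP k) ck) _ (closed_image_compact cX hY ce cS).
Qed.

Section SigmaProduct.
Context {I : choiceType} {X : I -> topologicalType} {T : topologicalType}.

Lemma open_sigT_prodl (S : set ({i & X i} * T)) :
  (forall i, open [set p : X i * T | S (existT _ i p.1, p.2)]) -> open S.
Proof.
move=> oS; rewrite openE => -[[i y] t] Syt.
have /open_nbhs_nbhs [[P Q] /= [Py Qt] PQS] :
    open_nbhs (y, t) [set p : X i * T | S (existT _ i p.1, p.2)].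
  by split => //; exact: oS.
exists (existT _ i @` P, Q) => /=; first by split => //; exact: existT_nbhs.
by move=> -[z w] /= [[y' Py' <-] Qw]; exact: (PQS (y', w)).
Qed.

Lemma open_sigT_prodr (S : set (T * {i & X i})) :
  (forall i, open [set p : T * X i | S (p.1, existT _ i p.2)]) -> open S.
Proof.
move=> oS; have -> : S = (fun p => (p.2, p.1)) @^-1` [set p | S (p.2, p.1)].
  by apply/seteqP; split => -[].
apply: (proj1 (continuousP _) continuous_swap); apply: open_sigT_prodl => i.
exact: (proj1 (continuousP _) continuous_swap _ (oS i)).
Qed.

End SigmaProduct.

Section ExtendedLowerSemicontinuity.
Context {R : realType}.

Definition lsc {T : topologicalType} (F : T -> \bar R) :=
  forall u, open [set x | u < F x].

Lemma lsc_comp {T U : topologicalType} (g : T -> U) (F : U -> \bar R) :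
  continuous g -> lsc F -> lsc (F \o g).
Proof. by move=> cg lF u; exact: (proj1 (continuousP g) cg _ (lF u)). Qed.

Lemma lsc_closed_sublevel {T : topologicalType} (F : T -> \bar R) :
  lsc F -> forall u, closed [set x | F x <= u].
Proof.
move=> lF u; rewrite (_ : [set x | F x <= u] = ~` [set x | u < F x]).
  exact/open_closedC/lF.
by apply/seteqP; split => x /=; rewrite leNgt => /negP.
Qed.

Lemma lte_dense (x y : \bar R) : x < y -> exists2 z, x < z & z < y.
Proof.
case: x => [r| |]; case: y => [t| |] //= xy.
- by rewrite lte_fin in xy; exists ((r + t) / 2)%R%:E; rewrite lte_fin; lra.
- by exists (r + 1)%R%:E; rewrite ?ltry // lte_fin; lra.
- by exists (t - 1)%R%:E; rewrite ?ltNyr // lte_fin; lra.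
- by exists 0.
Qed.

Lemma lteD_split (u a b : \bar R) : 0 <= a -> 0 <= b -> u < a + b ->
  exists v w : R, [/\ v%:E < a, w%:E < b & u <= (v + w)%:E].
Proof.
have ltN10 (c : \bar R) : 0 <= c -> (-1)%:E < c.
  by apply: lt_le_trans; rewrite lte_fin; lra.
case: u => [r| |] a0 b0; [|by rewrite ltNge leey|]; last first.
  by move=> _; exists (-1)%R, (-1)%R; rewrite leNye; split => //; exact: ltN10.
case: a a0 => [s| |] // a0; last first.
  move=> _; exists (r + 1)%R, (-1)%R.
  by rewrite ltry ltN10 // lee_fin; split => //; lra.
case: b b0 => [t| |] // b0; last first.
  move=> _; exists (s - 1)%R, (r - s + 1)%R.
  by rewrite !lte_fin ltry lee_fin; split => //; lra.
rewrite -EFinD lte_fin => rst; exists (s - (s + t - r) / 2)%R, (t - (s + t - r) / 2)%R.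
by rewrite !lte_fin lee_fin; split; lra.
Qed.

Lemma lscD {T : topologicalType} (f g : T -> \bar R) :
  (forall x, 0 <= f x) -> (forall x, 0 <= g x) -> lsc f -> lsc g ->
  lsc (fun x => f x + g x).
Proof.
move=> f0 g0 lf lg u.
rewrite (_ : [set x | u < f x + g x] =
  \bigcup_(vw in [set vw : R * R | u <= (vw.1 + vw.2)%:E])
     ([set x | vw.1%:E < f x] `&` [set x | vw.2%:E < g x])).
  by apply: bigcup_open => vw _; exact: openI.
apply/seteqP; split => x /=.
  by move=> /(lteD_split (f0 x) (g0 x)) [v [w [vf wg uvw]]]; exists (v, w).
by move=> [[v w] /= uvw [vf wg]]; apply: le_lt_trans uvw _; rewrite EFinD; exact: lteD.
Qed.

Lemma lsc_inf_attained {K : topologicalType} (G : K -> \bar R) (k0 : K) :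
  compact [set: K] -> lsc G -> exists k, G k = ereal_inf (range G).
Proof.
move=> cK lG; set s := ereal_inf (range G).
have [s_oo|s_fin] := eqVneq s +oo.
  exists k0; apply/eqP; rewrite s_oo -leye_eq -s_oo.
  by apply: ereal_inf_lbound; exists k0.
pose F := filter_from [set e | s < e] (fun e => [set k | G k <= e]).
have FF : ProperFilter F.
  apply: filter_from_proper; last first.
    by move=> e /ereal_inf_lt [_ [k _ <-] /ltW Gk]; exists k.
  apply: filter_from_filter; first by exists +oo; rewrite /= ltey.
  move=> e1 e2 se1 se2; exists (mine e1 e2); first by rewrite /= lt_min se1 se2.
  by move=> k /= Gk; split; apply: le_trans Gk _; rewrite ge_min lexx ?orbT.
have [k [_ clk]] := cK F FF filterT.
exists k; apply/eqP; rewrite eq_le ereal_inf_lbound ?andbT; last by exists k.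
rewrite leNgt; apply/negP => /lte_dense [z sz zG].
have Gkz : G k <= z.
  have cl : closed [set k | G k <= z] := lsc_closed_sublevel (u := z) lG.
  by apply cl => B kB; apply: clk kB; exists z.
by move: zG; rewrite ltNge Gkz.
Qed.

Lemma open_forall_lt {Y K : topologicalType} (F : Y -> K -> \bar R) u :
  compact [set: Y] -> hausdorff_space Y -> compact [set: K] ->
  lsc (fun p : Y * K => F p.1 p.2) -> open [set y | forall k, u < F y k].
Proof.
move=> cY hY cK lF.
rewrite (_ : [set y | forall k, u < F y k] = ~` (fst @` [set p | F p.1 p.2 <= u])).
  apply: closed_openC; apply: closed_image_compact => //.
  - exact: compact_setTX.
  - exact: fst_continuous.
  - exact: (lsc_closed_sublevel (u := u) lF).
apply/seteqP; split => y /=.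
  by move=> uF [[y' k] /= Fku ?]; subst y'; move: (uF k); rewrite ltNge Fku.
by move=> nF k; rewrite ltNge; apply/negP => Fku; apply: nF; exists (y, k).
Qed.

Lemma lsc_inf_compact {Y K : topologicalType} (F : Y -> K -> \bar R) :
  compact [set: Y] -> hausdorff_space Y -> compact [set: K] ->
  lsc (fun p : Y * K => F p.1 p.2) -> lsc (fun y => ereal_inf (range (F y))).
Proof.
move=> cY hY cK lF u.
rewrite (_ : [set y | u < ereal_inf (range (F y))] =
    [set y | forall k, u < F y k] `&` [set _ | u < +oo]).
  by apply: openI (open_cst_set _); exact: open_forall_lt.
apply/seteqP; split => y /=.
  move=> uF; split; last exact: lt_le_trans uF (leey _).
  by move=> k; apply: lt_le_trans uF _; apply: ereal_inf_lbound; exists k.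
case=> uF u_fin; have [[k0 _]|K0] := pselect (exists k : K, True).
  have lFy : lsc (F y).
    by have := lsc_comp (continuous_pair (@cst_continuous _ _ y) (fun k => cvg_id)) lF.
  by have [k <-] := lsc_inf_attained k0 cK lFy.
rewrite (_ : range (F y) = set0) ?ereal_inf0 //.
by apply/seteqP; split => // t [k]; case: K0; exists k.
Qed.

End ExtendedLowerSemicontinuity.

Record PseudoMetCH (R : realType) := MkPseudoMetCH {
  pm_space :> topologicalType;
  pm_d : pm_space -> pm_space -> \bar R;
  pm_compact : compact [set: pm_space];
  pm_hausdorff : hausdorff_space pm_space;
  pm_d_ge0 : forall x y, 0 <= pm_d x y;
  pm_d_refl : forall x, pm_d x x = 0;
  pm_d_triangle : forall x y z, pm_d x z <= pm_d x y + pm_d y z;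
  pm_d_lsc : lsc (fun p : pm_space * pm_space => pm_d p.1 p.2)
}.

Section SeparatedQuotient.
Context {R : realType} (X : PseudoMetCH R).
Local Notation d := (@pm_d R X).

Definition sq_rel (x y : X) := (d x y == 0) && (d y x == 0).

Lemma sq_rel_refl : reflexive sq_rel.
Proof. by move=> x; rewrite /sq_rel pm_d_refl eqxx. Qed.

Lemma sq_rel_sym : symmetric sq_rel.
Proof. by move=> x y; rewrite /sq_rel andbC. Qed.

Lemma sq_rel_trans : transitive sq_rel.
Proof.
move=> y x z /andP[/eqP xy /eqP yx] /andP[/eqP yz /eqP zy].
apply/andP; split; apply/eqP/le_anti; rewrite pm_d_ge0 andbT.
  by apply: le_trans (pm_d_triangle _ y _) _; rewrite xy yz adde0.
by apply: le_trans (pm_d_triangle _ y _) _; rewrite zy yx adde0.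
Qed.

Lemma pm_d_sq_rel x x' y y' : sq_rel x x' -> sq_rel y y' -> d x y = d x' y'.
Proof.
move=> /andP[/eqP xx' /eqP x'x] /andP[/eqP yy' /eqP y'y].
apply/eqP; rewrite eq_le; apply/andP; split.
  apply: le_trans (pm_d_triangle _ x' _) _; rewrite xx' add0e.
  by apply: le_trans (pm_d_triangle _ y' _) _; rewrite y'y adde0.
apply: le_trans (pm_d_triangle _ x _) _; rewrite x'x add0e.
by apply: le_trans (pm_d_triangle _ y _) _; rewrite yy' adde0.
Qed.

Lemma sq_rel_closed : closed [set p : X * X | sq_rel p.1 p.2].
Proof.
rewrite (_ : [set p : X * X | sq_rel p.1 p.2] =
    [set p | d p.1 p.2 <= 0] `&` [set p | d p.2 p.1 <= 0]).
  apply: closedI; apply: lsc_closed_sublevel; first exact: pm_d_lsc.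
  by have := lsc_comp continuous_swap (@pm_d_lsc R X).
apply/seteqP; split => -[x y] /=; first by case/andP => /eqP -> /eqP ->.
by case=> xy yx; apply/andP; split; apply/eqP/le_anti; rewrite pm_d_ge0 andbT.
Qed.

Lemma sq_class_closed x : closed [set y | sq_rel x y].
Proof.
have cx : continuous (fun y : X => (x, y)).
  exact: continuous_pair (@cst_continuous _ _ x) (fun y => cvg_id).
exact: (proj1 (continuous_closedP _) cx _ sq_rel_closed).
Qed.

Lemma open_sq_saturation (U : set X) : open U ->
  open [set x | forall y, sq_rel x y -> U y].
Proof.
move=> oU; rewrite (_ : [set x | forall y, sq_rel x y -> U y] =
    ~` (fst @` ([set p | sq_rel p.1 p.2] `&` ~` (snd @^-1` U)))).
  apply: closed_openC; apply: closed_image_compact.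
  - exact: compact_setTX (@pm_compact R X) (@pm_compact R X).
  - exact: pm_hausdorff.
  - exact: fst_continuous.
  apply: closedI sq_rel_closed (open_closedC _).
  exact: (proj1 (continuousP _) snd_continuous _ oU).
apply/seteqP; split => x /=.
  by move=> Ux [[x' y] /= [xy nUy] xx']; subst x'; exact: nUy (Ux _ xy).
by move=> nx y xy; apply: contrapT => nUy; apply: nx; exists (x, y).
Qed.

Definition sq_equiv := EquivRel sq_rel sq_rel_refl sq_rel_sym sq_rel_trans.
Definition sq_type := {eq_quot sq_equiv}.
HB.instance Definition _ := Topological.copy sq_type (quotient_topology sq_type).

Definition sq_pi : X -> sq_type := \pi_sq_type.

Lemma sq_piP x y : sq_pi x = sq_pi y <-> sq_rel x y.
Proof. by split => [/eqmodP|xy]; [|apply/eqmodP]. Qed.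

Lemma sq_rel_repr x : sq_rel (repr (sq_pi x)) x.
Proof. by apply/sq_piP; rewrite /sq_pi reprK. Qed.

Lemma sq_pi_continuous : continuous sq_pi.
Proof. exact: pi_continuous. Qed.

Definition sq_d (a b : sq_type) := d (repr a) (repr b).

Lemma sq_d_pi x y : sq_d (sq_pi x) (sq_pi y) = d x y.
Proof. exact: pm_d_sq_rel (sq_rel_repr x) (sq_rel_repr y). Qed.

Lemma sq_compact : compact [set: sq_type].
Proof.
rewrite (_ : [set: sq_type] = sq_pi @` [set: X]).
  apply: continuous_compact; last exact: pm_compact.
  exact/continuous_subspaceT/sq_pi_continuous.
by apply/seteqP; split => q // _; exists (repr q) => //; exact: reprK.
Qed.

Lemma sq_hausdorff : hausdorff_space sq_type.
Proof.
rewrite open_hausdorff => q1 q2 q12.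
have nrel : ~ sq_rel (repr q1) (repr q2).
  by move=> /sq_piP; rewrite /sq_pi !reprK => e; rewrite e eqxx in q12.
have disj : [set y | sq_rel (repr q1) y] `&` [set y | sq_rel (repr q2) y] = set0.
  apply/seteqP; split => // y [/= y1 y2]; apply: nrel.
  by apply: sq_rel_trans y1 _; rewrite sq_rel_sym.
have [U0 [V0 [oU0 oV0 U0q1 V0q2 UV0]]] := compact_closed_separation
  (@pm_hausdorff R X) (@pm_compact R X) (@sq_class_closed (repr q1))
  (@sq_class_closed (repr q2)) disj.
pose sat (W : set X) := [set x | forall y, sq_rel x y -> W y].
have sat_pi W : sq_pi @^-1` [set q | sat W (repr q)] = sat W.
  apply/seteqP; split => x /= Wx y xy; apply: Wx.
    by apply: sq_rel_trans xy; exact: sq_rel_repr.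
  by apply: sq_rel_trans xy; rewrite sq_rel_sym; exact: sq_rel_repr.
exists ([set q | sat U0 (repr q)], [set q | sat V0 (repr q)]).
  by rewrite !inE; split => y; [exact: U0q1|exact: V0q2].
have open_pi (W : set sq_type) : open (sq_pi @^-1` W) -> open W by [].
split; try by apply: open_pi; rewrite sat_pi; exact: open_sq_saturation.
apply/eqP; rewrite -subset0 => q [Uq Vq].
have : (U0 `&` V0) (repr q).
  by split; [exact: Uq (sq_rel_refl _)|exact: Vq (sq_rel_refl _)].
by rewrite UV0.
Qed.

Lemma sq_d_lsc : lsc (fun p : sq_type * sq_type => sq_d p.1 p.2).
Proof.
move=> u; rewrite (_ : [set p | u < sq_d p.1 p.2] =
    ~` ((fun p : X * X => (sq_pi p.1, sq_pi p.2)) @` [set p | d p.1 p.2 <= u])).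
  apply: closed_openC; apply: closed_image_compact.
  - exact: compact_setTX (@pm_compact R X) (@pm_compact R X).
  - exact: hausdorff_prod sq_hausdorff sq_hausdorff.
  - exact: continuous_prod_map sq_pi_continuous sq_pi_continuous.
  exact: lsc_closed_sublevel (@pm_d_lsc R X) u.
apply/seteqP; split => -[q1 q2] /=.
  move=> uq [[x y] /= dxy] [ex ey]; move: uq.
  by rewrite -ex -ey sq_d_pi ltNge dxy.
move=> nq; rewrite ltNge; apply/negP => dq; apply: nq.
by exists (repr q1, repr q2) => //=; rewrite /sq_pi !reprK.
Qed.

Lemma sq_d_sep a b : sq_d a b = 0 -> sq_d b a = 0 -> a = b.
Proof.
move=> ab ba; rewrite -[a]reprK -[b]reprK; apply/sq_piP.
by apply/andP; split; apply/eqP.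
Qed.

Definition sep_quotient : MetCH R :=
  MkMetCH sq_compact sq_hausdorff (fun a b => pm_d_ge0 _ _)
    (fun a => pm_d_refl _) (fun a b c => pm_d_triangle _ _ _) sq_d_sep
    sq_d_lsc.

End SeparatedQuotient.

Section RegularMonos.
Context {R : realType}.

Definition isometric (X Y : MetCH R) (f : X -> Y) :=
  forall x y, mc_d (f x) (f y) = mc_d x y.

Lemma isometric_inj (X Y : MetCH R) (f : X -> Y) : isometric f -> injective f.
Proof.
by move=> fi x y fxy; apply: mc_d_sep; rewrite -fi fxy mc_d_refl.
Qed.

Lemma mc_d_lsc (X Y : MetCH R) (f : X -> Y) : continuous f ->
  lsc (fun p : X * X => mc_d (f p.1) (f p.2)).
Proof.
by move=> cf; have := lsc_comp (continuous_prod_map cf cf) (@mc_d_cont R Y).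
Qed.

Lemma cst_hom (X Y : MetCH R) (y : Y) : is_hom (fun _ : X => y).
Proof.
split; first exact: cst_continuous.
by move=> x x'; rewrite mc_d_refl mc_d_ge0.
Qed.

Definition MetCH_point : MetCH R.
Proof.
refine (@MkMetCH R (discrete_topology unit) (fun _ _ => 0) _ discrete_hausdorff
  (fun _ _ => lexx 0) (fun _ => erefl) _ (fun 'tt 'tt _ _ => erefl)
  (fun u => open_cst_set _)).
- rewrite (_ : [set: _] = [set tt]); first exact: compact_set1.
  by apply/seteqP; split => -[].
- by move=> *; rewrite adde0.
Defined.

Section Comap.
Variables (A B : MetCH R) (m : A -> B).
Hypotheses (m_inj : injective m) (m_cont : continuous m).

Definition MetCH_comap : MetCH R :=
  MkMetCH (@mc_compact R A) (@mc_hausdorff R A)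
    (fun x y => mc_d_ge0 (m x) (m y)) (fun x => mc_d_refl (m x))
    (fun x y z => mc_d_triangle (m x) (m y) (m z))
    (fun x y mxy myx => m_inj (mc_d_sep mxy myx)) (mc_d_lsc m_cont).

End Comap.

Lemma regular_mono_inj (A B : MetCH R) (m : A -> B) :
  regular_mono m -> injective m.
Proof.
case=> C [g [h [_ [_ [_ [gm univ]]]]]] a1 a2 ma.
have gk : g \o (fun _ : MetCH_point => m a1) = h \o (fun _ => m a1).
  by apply: funext => z; exact: (congr1 (fun F => F a1) gm).
have [u [_ _ u_uniq]] := univ _ _ (cst_hom _ _) gk.
have u1 := u_uniq (fun _ => a1) (cst_hom _ _) erefl.
have u2 := u_uniq (fun _ => a2) (cst_hom _ _) (funext (fun _ => esym ma)).
exact: (congr1 (fun F => F tt) (etrans u1 (esym u2))).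
Qed.

Lemma regular_mono_isometric (A B : MetCH R) (m : A -> B) :
  regular_mono m -> isometric m.
Proof.
move=> rm; have m_inj := regular_mono_inj rm.
case: rm => C [g [h [[m_cont m_le] [_ [_ [gm univ]]]]]].
have hm : is_hom (m : MetCH_comap m_inj m_cont -> B) by split => // x y; exact: lexx.
have [u [[_ u_le] mu _]] := univ _ _ hm gm.
have u_id x : u x = x by apply: (m_inj); exact: (congr1 (fun F => F x) mu).
move=> x y; apply/le_anti; rewrite m_le /=.
by have := u_le x y; rewrite !u_id.
Qed.

End RegularMonos.

Section Gluing.
Context {R : realType} (A : MetCH R) (Y : bool -> MetCH R) (j : forall i, A -> Y i).
Hypothesis j_cont : forall i, continuous (j i).
Hypothesis j_le :
  forall a a', mc_d (j false a) (j false a') <= mc_d (j true a) (j true a').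

Local Notation S := {i : bool & mc_space (Y i)}.

(* [dglue x y] is the direct distance inside one piece ([+oo] across the two
   pieces) or the cost of the cheapest path [x -> j a ~> j a' -> y] through
   [A], whose middle leg is measured in [Y false]; [j_le] is what makes it
   satisfy the triangle inequality. *)

Definition dsum (x y : S) : \bar R :=
  match x, y with
  | existT true a, existT true b => mc_d a b
  | existT false a, existT false b => mc_d a b
  | _, _ => +oo
  end.

Definition dto (x : S) (a : A) := mc_d (projT2 x) (j (projT1 x) a).
Definition dfrom (a : A) (y : S) := mc_d (j (projT1 y) a) (projT2 y).
Definition dA (a a' : A) := mc_d (j false a) (j false a').
Definition dpath (x y : S) (p : A * A) := dto x p.1 + dA p.1 p.2 + dfrom p.2 y.
Definition dvia (x y : S) := ereal_inf (range (dpath x y)).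
Definition dglue (x y : S) := mine (dsum x y) (dvia x y).

Let d_neNy (Z : MetCH R) (u v : Z) : mc_d u v != -oo.
Proof. by case: (mc_d u v) (mc_d_ge0 u v). Qed.

Lemma dsum_ge0 x y : 0 <= dsum x y.
Proof. by case: x => -[] a; case: y => -[] b /=; rewrite ?mc_d_ge0 ?leey. Qed.

Lemma dpath_ge0 x y p : 0 <= dpath x y p.
Proof. by rewrite /dpath !adde_ge0 ?mc_d_ge0. Qed.

Lemma dglue_ge0 x y : 0 <= dglue x y.
Proof.
rewrite /dglue le_min dsum_ge0; apply/ereal_infP => _ [p _ <-].
exact: dpath_ge0.
Qed.

Lemma dglue_refl x : dglue x x = 0.
Proof.
apply/le_anti; rewrite dglue_ge0 andbT /dglue ge_min.
by case: x => -[] a; rewrite /= mc_d_refl lexx.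
Qed.

Lemma dsum_triangle x y z : dsum x z <= dsum x y + dsum y z.
Proof.
case: x => -[] a; case: y => -[] b; case: z => -[] c /=;
  by rewrite ?mc_d_triangle ?(addye (d_neNy _ _)) ?(addey (d_neNy _ _)) ?leey.
Qed.

Lemma dto_triangle x y a : dto x a <= dsum x y + dto y a.
Proof.
case: x => -[] b; case: y => -[] c /=; rewrite /dto /=;
  by rewrite ?mc_d_triangle ?(addye (d_neNy _ _)) ?leey.
Qed.

Lemma dfrom_triangle a y z : dfrom a z <= dfrom a y + dsum y z.
Proof.
case: z => -[] c; case: y => -[] b /=; rewrite /dfrom /=;
  by rewrite ?mc_d_triangle ?(addey (d_neNy _ _)) ?leey.
Qed.

Lemma dA_triangle_via a y a' : dA a a' <= dfrom a y + dto y a'.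
Proof.
case: y => -[] b; rewrite /dA /dfrom /dto /=; last exact: mc_d_triangle.
exact: le_trans (j_le a a') (mc_d_triangle _ _ _).
Qed.

Lemma dpath_concat x y z p q :
  dpath x z (p.1, q.2) <= dpath x y p + dpath y z q.
Proof.
rewrite /dpath /=.
apply: (@le_trans _ _ (dto x p.1 + (dA p.1 p.2 + (dfrom p.2 y + dto y q.1
  + dA q.1 q.2)) + dfrom q.2 z)); last by rewrite !addeA.
apply: leeD2r; apply: leeD2l.
apply: le_trans (mc_d_triangle _ (j false p.2) _) _; apply: leeD2l.
apply: le_trans (mc_d_triangle _ (j false q.1) _) _; apply: leeD2r.
exact: dA_triangle_via.
Qed.

Lemma dvia_le x y p : dvia x y <= dpath x y p.
Proof. by apply: ereal_inf_lbound; exists p. Qed.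

Lemma dsum_lsc : lsc (fun q : S * S => dsum q.1 q.2).
Proof.
move=> u; apply: open_sigT_prodl => i; apply: open_sigT_prodr => k.
by case: i; case: k => /=; first [exact: mc_d_cont|exact: (open_cst_set (u < +oo))].
Qed.

Lemma dto_lsc : lsc (fun q : S * A => dto q.1 q.2).
Proof.
move=> u; apply: open_sigT_prodl => i.
by have := lsc_comp (continuous_prod_map (fun y => cvg_id) (@j_cont i))
  (@mc_d_cont R (Y i)) u.
Qed.

Lemma dfrom_lsc : lsc (fun q : A * S => dfrom q.1 q.2).
Proof.
move=> u; apply: open_sigT_prodr => i.
by have := lsc_comp (continuous_prod_map (@j_cont i) (fun y => cvg_id))
  (@mc_d_cont R (Y i)) u.
Qed.

Lemma dpath_lsc : lsc (fun w : (S * S) * (A * A) => dpath w.1.1 w.1.2 w.2).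
Proof.
have c : continuous (fun w : (S * S) * (A * A) => (w.2.2, w.1.2)).
  move=> w; apply: (continuous_comp (f := fun w => (w.1.2, w.2.2))
    (g := fun p => (p.2, p.1))); last exact: continuous_swap.
  exact: continuous_prod_map snd_continuous snd_continuous w.
apply: lscD; [by move=> w; rewrite adde_ge0 ?mc_d_ge0|by move=> w; exact: mc_d_ge0| |].
  apply: lscD; [by move=> w; exact: mc_d_ge0|by move=> w; exact: mc_d_ge0| |].
    by have := lsc_comp (continuous_prod_map fst_continuous fst_continuous) dto_lsc.
  by have := lsc_comp (@snd_continuous (S * S)%type (A * A)%type) (mc_d_lsc (@j_cont false)).
by have := lsc_comp c dfrom_lsc.
Qed.

Lemma S_compact : compact [set: S].
Proof. by apply: sigT_compact => [|i]; [exact: finite_finset|exact: mc_compact]. Qed.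

Lemma S_hausdorff : hausdorff_space S.
Proof. by apply: sigT_hausdorff => i; exact: mc_hausdorff. Qed.

Lemma dvia_lsc : lsc (fun q : S * S => dvia q.1 q.2).
Proof.
apply: (@lsc_inf_compact _ _ _ (fun q p => dpath q.1 q.2 p)) dpath_lsc.
- exact: compact_setTX S_compact S_compact.
- exact: hausdorff_prod S_hausdorff S_hausdorff.
- exact: compact_setTX (@mc_compact R A) (@mc_compact R A).
Qed.

Lemma dglue_lsc : lsc (fun q : S * S => dglue q.1 q.2).
Proof.
move=> u; rewrite (_ : [set q | u < dglue q.1 q.2] =
    [set q | u < dsum q.1 q.2] `&` [set q | u < dvia q.1 q.2]).
  by apply: openI; [exact: dsum_lsc|exact: dvia_lsc].
by apply/seteqP; split => q /=; rewrite /dglue lt_min => /andP.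
Qed.

Lemma dvia_attained (a0 : A) x y : exists p, dvia x y = dpath x y p.
Proof.
have c : continuous (fun p : A * A => ((x, y), p)).
  exact: continuous_pair (@cst_continuous _ _ (x, y)) (fun p => cvg_id).
have l : lsc (dpath x y) by have := lsc_comp c dpath_lsc.
have [p pE] := lsc_inf_attained (a0, a0) (compact_setTX (@mc_compact R A)
  (@mc_compact R A)) l.
by exists p; rewrite pE.
Qed.

Lemma dvia_empty x y : ~ (exists a : A, True) -> dvia x y = +oo.
Proof.
move=> nA; rewrite /dvia (_ : range _ = set0) ?ereal_inf0 //.
by apply/seteqP; split => // t [[a b] _]; case: nA; exists a.
Qed.

Let le_min_add (t a b c e : \bar R) : t <= a + c -> t <= a + e ->
  t <= b + c -> t <= b + e -> t <= mine a b + mine c e.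
Proof. by case: (leP a b); case: (leP c e). Qed.

Lemma dglue_triangle x y z : dglue x z <= dglue x y + dglue y z.
Proof.
have [[a0 _]|nA] := pselect (exists a : A, True); last first.
  by rewrite /dglue !dvia_empty // !min_l ?leey //; exact: dsum_triangle.
rewrite /dglue; have [p ->] := dvia_attained a0 x y.
have [q ->] := dvia_attained a0 y z.
apply: le_min_add; rewrite ge_min; apply/orP.
- by left; exact: dsum_triangle.
- right; apply: le_trans (dvia_le x z q) _; rewrite /dpath !addeA.
  by do 2 apply: leeD2r; exact: dto_triangle.
- right; apply: le_trans (dvia_le x z p) _; rewrite /dpath -!addeA.
  by do 2 apply: leeD2l; exact: dfrom_triangle.
- by right; apply: le_trans (dvia_le x z (p.1, q.2)) (dpath_concat _ _ _ _ _).
Qed.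

Definition glue_pseudo : PseudoMetCH R :=
  MkPseudoMetCH S_compact S_hausdorff dglue_ge0 dglue_refl dglue_triangle dglue_lsc.

Definition glued : MetCH R := sep_quotient glue_pseudo.

Definition glue_in (i : bool) (y : Y i) : glued :=
  @sq_pi R glue_pseudo (existT _ i y).

Lemma glue_in_d i (y y' : Y i) :
  mc_d (glue_in y) (glue_in y') = dglue (existT _ i y) (existT _ i y').
Proof. exact: (@sq_d_pi R glue_pseudo). Qed.

Lemma glue_in_hom i : is_hom (@glue_in i).
Proof.
split.
  move=> y; apply: (continuous_comp (f := existT _ i)).
    exact: existT_continuous.
  exact: sq_pi_continuous.
by move=> y y'; rewrite glue_in_d /dglue ge_min; case: i y y' => y y' /=; rewrite lexx.
Qed.

Lemma glue_in_j a : glue_in (j true a) = glue_in (j false a).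
Proof.
apply/sq_piP; apply/andP; split; apply/eqP/le_anti; rewrite dglue_ge0 andbT;
  rewrite /dglue ge_min; apply/orP; right; apply: le_trans (dvia_le _ _ (a, a)) _;
  by rewrite /dpath /dto /dA /dfrom /= !mc_d_refl !adde0.
Qed.

Lemma glue_in_false_isometric : isometric (@glue_in false).
Proof.
move=> c c'; rewrite glue_in_d /dglue min_l //=.
apply/ereal_infP => _ [p _ <-]; rewrite /dpath /dto /dA /dfrom /=.
apply: le_trans (mc_d_triangle _ (j false p.1) _) _; rewrite -addeA; apply: leeD2l.
exact: mc_d_triangle.
Qed.

Lemma glue_in_true_false (y0 : Y true) (y1 : Y false) :
  glue_in y0 = glue_in y1 -> exists p : A * A,
    [/\ mc_d y0 (j true p.1) = 0, dA p.1 p.2 = 0 & mc_d (j false p.2) y1 = 0].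
Proof.
move=> /sq_piP /andP[/eqP via0 _].
change (dglue (existT _ true y0) (existT _ false y1) = 0) in via0.
rewrite /dglue /= min_r ?leey // in via0.
have [[a _]|nA] := pselect (exists a : A, True); last by rewrite dvia_empty in via0.
have [p pE] := dvia_attained a (existT _ true y0) (existT _ false y1).
move: via0; rewrite pE => /eqP; rewrite /dpath !padde_eq0 ?adde_ge0 ?mc_d_ge0 //.
by case/andP => /andP[/eqP ? /eqP ?] /eqP ?; exists p.
Qed.

End Gluing.

Section PushoutsOfRegularMonos.
Context {R : realType}.

Lemma isometric_regular_mono (X Y : MetCH R) (e : X -> Y) :
  is_hom e -> isometric e -> regular_mono e.
Proof.
move=> [e_cont e_le] e_iso; have e_inj := isometric_inj e_iso.
pose j (i : bool) : X -> (fun=> Y) i := e.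
have j_cont i : continuous (j i) by [].
have j_le a a' : mc_d (j false a) (j false a') <= mc_d (j true a) (j true a').
  exact: lexx.
pose g := @glue_in R X (fun=> Y) j j_cont j_le.
exists (glued j_cont j_le), (g true), (g false).
split; first by [].
split; first exact: glue_in_hom.
split; first exact: glue_in_hom.
split; first exact: funext (glue_in_j j_cont j_le).
move=> Z k [k_cont k_le] gk.
have k_range z : exists x, e x = k z.
  have [p [kp pp pk]] := glue_in_true_false (congr1 (fun F => F z) gk).
  exists p.2; apply: mc_d_sep => //; apply/le_anti; rewrite mc_d_ge0 andbT.
  apply: le_trans (mc_d_triangle _ (e p.1) _) _.
  by move: pp; rewrite kp add0e /dA /= => ->.
pose u z := projT1 (cid (k_range z)).
have eu : e \o u = k by apply: funext => z; exact: projT2 (cid (k_range z)).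
exists u; split => //.
  split; last by move=> z z'; rewrite -e_iso; have := k_le z z'; rewrite -eu.
  exact: continuous_factor_compact_inj (@mc_compact R X) (@mc_hausdorff R Y)
    e_cont e_inj k_cont eu.
by move=> v _ ev; apply: funext => z; apply: e_inj; rewrite -/((e \o v) z) ev -eu.
Qed.

Lemma pushout_isometric (A B C P : MetCH R) (m : A -> B) (f : A -> C)
    (f' : B -> P) (m' : C -> P) :
  isometric m -> is_pushout m f f' m' -> isometric m'.
Proof.
move=> m_iso [[m_cont _] [[f_cont f_le] [_ [[_ m'_le] [_ univ]]]]].
pose Y (i : bool) := if i then B else C.
pose j (i : bool) : A -> Y i := if i return A -> Y i then m else f.
have j_cont i : continuous (j i) by case: i.
have j_le a a' : mc_d (j false a) (j false a') <= mc_d (j true a) (j true a').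
  by rewrite /= m_iso; exact: f_le.
have [u [[_ u_le] _ um' _]] := univ _ _ _ (glue_in_hom j_cont j_le true)
  (glue_in_hom j_cont j_le false) (funext (glue_in_j j_cont j_le)).
move=> c c'; apply/le_anti; rewrite m'_le /=.
rewrite -(glue_in_false_isometric j_cont j_le) -um'.
exact: u_le.
Qed.

End PushoutsOfRegularMonos.

Theorem corollary4p7 (R : realType) (A B C P : MetCH R)
    (m : A -> B) (f : A -> C) (f' : B -> P) (m' : C -> P) :
  regular_mono m -> is_hom f -> is_pushout m f f' m' -> regular_mono m'.
Proof.
move=> m_reg _ po; have [_ [_ [_ [m'_hom _]]]] := po.
apply: isometric_regular_mono m'_hom _.
exact: pushout_isometric (regular_mono_isometric m_reg) po.
Qed.
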